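(* Let $z$ be a positive integer and let $C$ be a quasi-cyclic LDPC code with circulant matrices of size $z$ whose base matrix is the $8\times 24$ matrix $H_{b(2/3B)}$ below. Then there is no quasi-cyclic LDPC code $D$ with circulant matrices of size $z$ such that (i) the parity-check matrices $H_C$ and $H_D$ have the same row-weight distribution, (ii) every column of $H_D$ has Hamming weight at least $2$, and (iii) $D^{\perp}\subset C$. The rows of $H_{b(2/3B)}$ are: 101010101010101011000000, 010101010101010101100000, 101010101010101000110000, 010101010101010100011000, 101010101010101000001100, 010101010101010100000110, 101010101010101010000011, 010101010101010110000001.
   Context: All codes are binary linear codes over $\mathbb{F}_2$; $D^{\perp}=\{d' : d\,d'^T=0\ \forall d\in D\}$. For a positive integer $z$, $I_z(1)$ is the $z\times z$ circulant permutation matrix of one circular right shift and $I_z(b)=I_z(1)^b$. A quasi-cyclic LDPC code with circulant matrices of size $z$ is given by a $J\times L$ model matrix with entries in $\{0,\dots,z-1\}\cup\{\infty\}$; its parity-check matrix $H$ is obtained by replacing each finite entry $p$ by $I_z(p)$ and each $\infty$ by the $z\times z$ zero matrix, and the code is $\{x\in\mathbb{F}_2^{zL}:Hx^T=0\}$. Its base matrix is the binary $J\times L$ matrix with $1$ exactly where the model entry is finite. The row-weight distribution of a binary matrix is the multiset of Hamming weights of its rows (for each $w$, the number of rows of weight $w$). The matrix $H_{b(2/3B)}$ is the base matrix of the rate-$2/3$B LDPC codes of the IEEE802.16e standard. *)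

From mathcomp Require Import all_boot all_order all_algebra.
Set Implicit Arguments. Unset Strict Implicit. Unset Printing Implicit Defensive.
Import GRing.Theory.
Local Open Scope ring_scope.

Lemma blk_pos (J z : nat) (k : 'I_(J * z)) : (0 < z)%N.
Proof.
have H : (nat_of_ord k < J * z)%N := ltn_ord k.
have H0 : (0 < J * z)%N by apply: leq_ltn_trans H.
by move: H0; rewrite muln_gt0 => /andP[].
Qed.

Lemma blk_lt (J z : nat) (k : 'I_(J * z)) : (k %/ z < J)%N.
Proof. rewrite ltn_divLR ?(blk_pos k) //; exact: ltn_ord. Qed.

Lemma inb_lt (J z : nat) (k : 'I_(J * z)) : (k %% z < z)%N.
Proof. exact: ltn_pmod (blk_pos k). Qed.

Definition blk (J z : nat) (k : 'I_(J * z)) : 'I_J := Ordinal (blk_lt k).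
Definition inb (J z : nat) (k : 'I_(J * z)) : 'I_z := Ordinal (inb_lt k).

(* I_z(b): the z x z circulant permutation matrix = (I_z(1))^b, where I_z(1)
   is the identity circularly shifted right by one: row i has its 1 in
   column (i + b) mod z. *)
Definition circ (z : nat) (b : nat) : 'M['F_2]_z :=
  \matrix_(i < z, j < z) ((j : nat) == (i + b) %% z)%N%:R.

(* Model matrix: entries in {0,...,z-1} ∪ {∞}, with ∞ represented by None. *)
Definition model_mx (z J L : nat) := 'M[option 'I_z]_(J, L).

Definition qc_pcm (z J L : nat) (M : model_mx z J L) : 'M['F_2]_(J * z, L * z) :=
  \matrix_(k, l)
    match M (blk k) (blk l) with
    | Some p => circ z p (inb k) (inb l)
    | None => 0
    end.

Definition base_mx (z J L : nat) (M : model_mx z J L) : 'M['F_2]_(J, L) :=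
  \matrix_(i, j) (M i j != None)%:R.

Definition code_of (m n : nat) (H : 'M['F_2]_(m, n)) : {set 'rV['F_2]_n} :=
  [set x : 'rV['F_2]_n | H *m x^T == 0].

Definition dual_code (n : nat) (D : {set 'rV['F_2]_n}) : {set 'rV['F_2]_n} :=
  [set d' : 'rV['F_2]_n | [forall d in D, d *m d'^T == 0]].

Definition row_wt (m n : nat) (H : 'M['F_2]_(m, n)) (i : 'I_m) : nat :=
  #|[set j : 'I_n | H i j != 0]|.
Definition col_wt (m n : nat) (H : 'M['F_2]_(m, n)) (j : 'I_n) : nat :=
  #|[set i : 'I_m | H i j != 0]|.

Definition same_row_wt_distr (m1 m2 n1 n2 : nat)
  (H1 : 'M['F_2]_(m1, n1)) (H2 : 'M['F_2]_(m2, n2)) : Prop :=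
  forall w : nat, #|[set i | row_wt H1 i == w]| = #|[set i | row_wt H2 i == w]|.

(* The base matrix H_{b(2/3B)} of the IEEE 802.16e rate-2/3B LDPC codes. *)
Definition hb23B_rows : seq (seq nat) :=
  [:: [:: 1;0;1;0;1;0;1;0;1;0;1;0;1;0;1;0;1;1;0;0;0;0;0;0];
      [:: 0;1;0;1;0;1;0;1;0;1;0;1;0;1;0;1;0;1;1;0;0;0;0;0];
      [:: 1;0;1;0;1;0;1;0;1;0;1;0;1;0;1;0;0;0;1;1;0;0;0;0];
      [:: 0;1;0;1;0;1;0;1;0;1;0;1;0;1;0;1;0;0;0;1;1;0;0;0];
      [:: 1;0;1;0;1;0;1;0;1;0;1;0;1;0;1;0;0;0;0;0;1;1;0;0];
      [:: 0;1;0;1;0;1;0;1;0;1;0;1;0;1;0;1;0;0;0;0;0;1;1;0];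
      [:: 1;0;1;0;1;0;1;0;1;0;1;0;1;0;1;0;1;0;0;0;0;0;1;1];
      [:: 0;1;0;1;0;1;0;1;0;1;0;1;0;1;0;1;1;0;0;0;0;0;0;1] ].

Definition Hb23B : 'M['F_2]_(8, 24) :=
  \matrix_(i < 8, j < 24) (nth 0%N (nth [::] hb23B_rows i) j)%:R.

From mathcomp Require Import all_boot all_order all_algebra.
From mathcomp Require Import zify.
Set Implicit Arguments. Unset Strict Implicit. Unset Printing Implicit Defensive.
Import GRing.Theory.
Local Open Scope ring_scope.

(* Over F_2, multiplying H_C on the left by the all-ones vector adds up the
   rows of H_C.  Every circulant block contributes one 1 to each of its
   columns, so the sum is the indicator of the block columns of odd weight in
   the base matrix; for H_{b(2/3B)} this is block column 16 alone (weight 3,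
   all other columns have weight 2 or 4).  As every row h of H_D lies in
   D^perp, hence in C, the inner product of h with this indicator vanishes,
   i.e. h has an even number of 1s in block column 16.  A circulant block
   puts exactly one 1 in each of its rows, so block column 16 of H_D has no
   circulant blocks at all, and its columns have weight 0 < 2. *)

Section BlockIndex.
Variables J z : nat.

Lemma blk_inb_inj (k k' : 'I_(J * z)) : blk k = blk k' -> inb k = inb k' -> k = k'.
Proof.
move=> /(congr1 val) /= Hblk /(congr1 val) /= Hinb.
by apply: val_inj; rewrite /= (divn_eq k z) (divn_eq k' z) Hblk Hinb.
Qed.

Lemma blk_ord_subproof (i : 'I_J) (t : 'I_z) : (i * z + t < J * z)%N.
Proof. by have := ltn_ord i; have := ltn_ord t; nia. Qed.

Definition blk_ord (i : 'I_J) (t : 'I_z) : 'I_(J * z) := Ordinal (blk_ord_subproof i t).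

Lemma blk_ordK (i : 'I_J) (t : 'I_z) : blk (blk_ord i t) = i.
Proof.
have z_gt0 : (0 < z)%N by apply: leq_ltn_trans (ltn_ord t).
by apply: val_inj; rewrite /= divnMDl // divn_small ?addn0.
Qed.

Lemma inb_blk_ord (i : 'I_J) (t : 'I_z) : inb (blk_ord i t) = t.
Proof. by apply: val_inj; rewrite /= modnMDl modn_small. Qed.

Lemma sum_blk (R : nmodType) (i : 'I_J) (F : 'I_z -> R) :
  \sum_(k < J * z | blk k == i) F (inb k) = \sum_(t < z) F t.
Proof.
rewrite (reindex_onto (blk_ord i) (@inb J z)) => [|k /eqP blk_k].
  by apply: eq_big => t; rewrite ?blk_ordK ?inb_blk_ord !eqxx.
by apply: blk_inb_inj; rewrite ?blk_ordK ?inb_blk_ord.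
Qed.

End BlockIndex.

Lemma circ_row_sum (z p : nat) (i : 'I_z) : \sum_(j < z) circ z p i j = 1.
Proof.
have z_gt0 : (0 < z)%N by apply: leq_ltn_trans (ltn_ord i).
pose j0 : 'I_z := Ordinal (ltn_pmod (i + p) z_gt0).
rewrite (bigD1 j0) //= big1 => [|j j_neq]; first by rewrite mxE eqxx addr0.
by rewrite mxE; case: eqP => // j_val; case/eqP: j_neq; apply: ord_inj.
Qed.

Lemma circ_col_sum (z p : nat) (j : 'I_z) : \sum_(i < z) circ z p i j = 1.
Proof.
have z_gt0 : (0 < z)%N by apply: leq_ltn_trans (ltn_ord j).
have p_le : (p %% z <= z)%N by rewrite ltnW ?ltn_pmod.
pose i0 : 'I_z := Ordinal (ltn_pmod (j + (z - p %% z)) z_gt0).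
have i0_hit : ((i0 + p) %% z)%N = j.
  by rewrite /= modnDml -modnDmr -addnA subnK // modnDr modn_small.
rewrite (bigD1 i0) //= big1 => [|i i_neq]; first by rewrite mxE i0_hit eqxx addr0.
rewrite mxE; case: eqP => // j_val; case/eqP: i_neq; apply: ord_inj.
apply/eqP; rewrite -(modn_small (ltn_ord i)) -(modn_small (ltn_ord i0)).
by rewrite -(eqn_modDr p) i0_hit -j_val.
Qed.

Section QCBlockSums.
Variables (z J L : nat) (M : model_mx z J L).

Lemma qc_pcm_sum_block_col (i : 'I_J) (l : 'I_(L * z)) :
  \sum_(k < J * z | blk k == i) qc_pcm M k l = base_mx M i (blk l).
Proof.
under eq_bigr => k /eqP blk_k do rewrite mxE blk_k.
rewrite mxE; case: (M i (blk l)) => [p|] /=; last by rewrite big1.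
by rewrite (sum_blk i (fun t => circ z p t (inb l))) circ_col_sum.
Qed.

Lemma qc_pcm_sum_block_row (k : 'I_(J * z)) (c : 'I_L) :
  \sum_(l < L * z | blk l == c) qc_pcm M k l = base_mx M (blk k) c.
Proof.
under eq_bigr => l /eqP blk_l do rewrite mxE blk_l.
rewrite mxE; case: (M (blk k) c) => [p|] /=; last by rewrite big1.
by rewrite (sum_blk c (fun t => circ z p (inb k) t)) circ_row_sum.
Qed.

Lemma qc_pcm_col_sum (l : 'I_(L * z)) :
  \sum_(k < J * z) qc_pcm M k l = \sum_(i < J) base_mx M i (blk l).
Proof.
rewrite (partition_big (@blk J z) predT) //=.
by apply: eq_bigr => i _; rewrite qc_pcm_sum_block_col.
Qed.

Lemma col_wt_qc_pcm_empty (l : 'I_(L * z)) :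
  (forall i, M i (blk l) = None) -> col_wt (qc_pcm M) l = 0%N.
Proof.
move=> empty_l; apply/eqP; rewrite cards_eq0; apply/eqP/setP => k.
by rewrite !inE mxE empty_l eqxx.
Qed.

End QCBlockSums.

Lemma row_in_dual_code (m n : nat) (H : 'M['F_2]_(m, n)) (r : 'I_m) :
  row r H \in dual_code (code_of H).
Proof.
rewrite inE; apply/forallP => d; apply/implyP; rewrite inE => /eqP Hd.
by rewrite -(trmxK (d *m _)) trmx_mul trmxK -row_mul Hd row0 trmx0.
Qed.

Lemma dual_sub_qc_block_col_empty (z K J L : nat) (MC : model_mx z K L)
    (MD : model_mx z J L) (b : 'I_L) :
  (0 < z)%N ->
  (forall c, \sum_(i < K) base_mx MC i c = (c == b)%:R) ->
  dual_code (code_of (qc_pcm MD)) \subset code_of (qc_pcm MC) ->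
  forall i, MD i b = None.
Proof.
move=> z_gt0 col_sum_MC sub_C i.
set r := blk_ord i (Ordinal z_gt0).
have /eqP row_r_in_C : qc_pcm MC *m (row r (qc_pcm MD))^T == 0.
  by have := subsetP sub_C _ (row_in_dual_code _ r); rewrite inE.
have ones_HC : (const_mx 1 : 'rV_(K * z)) *m qc_pcm MC = \row_l (blk l == b)%:R.
  apply/rowP => l; rewrite !mxE (eq_bigr (fun k => qc_pcm MC k l)) => [|k _].
    by rewrite qc_pcm_col_sum col_sum_MC.
  by rewrite mxE mul1r.
have := congr1 (mulmx (const_mx 1 : 'rV_(K * z))) row_r_in_C.
rewrite mulmxA ones_HC mulmx0 => /rowP/(_ 0); rewrite !mxE.
rewrite (eq_bigr (fun l => if blk l == b then qc_pcm MD r l else 0)) => [|l _].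
  rewrite -big_mkcond qc_pcm_sum_block_row blk_ordK mxE.
  by case: (MD i b) => // p /eqP; rewrite oner_eq0.
by rewrite !mxE; case: eqP; rewrite ?mul1r ?mul0r.
Qed.

Lemma Hb23B_col_sum (c : 'I_24) :
  \sum_(i < 8) Hb23B i c = (c == Ordinal (isT : (16 < 24)%N))%:R.
Proof.
rewrite !big_ord_recr big_ord0 !mxE /=.
case: c => c c_lt /=.
by do 24! (case: c c_lt => [|c] c_lt; first by apply/eqP; vm_compute).
Qed.

Theorem mainTheorem3 :
  forall (z : nat), (0 < z)%N ->
  forall (MC : model_mx z 8 24), base_mx MC = Hb23B ->
  ~ (exists (J : nat) (MD : model_mx z J 24),
       [/\ same_row_wt_distr (qc_pcm MC) (qc_pcm MD),
           (forall j, (2 <= col_wt (qc_pcm MD) j)%N) &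
           dual_code (code_of (qc_pcm MD)) \subset code_of (qc_pcm MC)]).
Proof.
move=> z z_gt0 MC base_MC [J [MD [_ col_wt_ge2 sub_C]]].
pose b16 : 'I_24 := Ordinal (isT : (16 < 24)%N).
have col_sum_MC c : \sum_(i < 8) base_mx MC i c = (c == b16)%:R.
  by rewrite base_MC Hb23B_col_sum.
have col16_empty := dual_sub_qc_block_col_empty z_gt0 col_sum_MC sub_C.
have := col_wt_ge2 (blk_ord b16 (Ordinal z_gt0)).
by rewrite col_wt_qc_pcm_empty // blk_ordK.
Qed.
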